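(* Let $\succcurlyeq$ be a preference relation on the set $\mathcal{B}$ of bets over a propositional language $\mathcal{L}$. The following are equivalent: (1) $\succcurlyeq$ satisfies Non-Triviality and Objective Expected Utility; (2) $\succcurlyeq$ is represented by a subjective model of uncertainty $(\Omega,t,\lambda)$ with $\lambda$ additive.
   Context: Let $\mathbb{P}$ be a set of propositional variables containing two distinguished propositions $\mathbf{T}$ (''true'') and $\mathbf{F}$ (''false''), and let $\mathcal{L}=\mathcal{L}(\mathbb{P})$ be the language generated from $\mathbb{P}$ by $\neg,\land,\lor$. A bet is a function $b:\mathcal{L}\to[0,1]$ with finite support $\mathrm{supp}(b)=\{\phi: b(\phi)>0\}$ and $\sum_{\phi\in\mathrm{supp}(b)} b(\phi)=1$; the primitive bet $b_\phi$ assigns $1$ to $\phi$ and $0$ elsewhere. The set $\mathcal{B}$ of bets is a mixture space under pointwise mixtures. $\succcurlyeq$ is a binary relation on $\mathcal{B}$ with symmetric part $\sim$ and asymmetric part $\succ$. For a set $\Omega$, a truth valuation is a map $t:\mathcal{L}\to 2^\Omega$ with $t(\mathbf{T})=\Omega$, $t(\mathbf{F})=\emptyset$. For a field of sets $\Sigma\subseteq 2^\Omega$, a likelihood appraisal is a map $\lambda:\Sigma\to[0,1]$ with $\lambda(\emptyset)=0$, $\lambda(\Omega)=1$; it is additive if $\lambda(A\cup B)=\lambda(A)+\lambda(B)$ whenever $A,B\in\Sigma$ are disjoint. A subjective model of uncertainty is a triple $(\Omega,t,\lambda)$ with $t$ a truth valuation and $\lambda$ a likelihood appraisal on a field $\Sigma\supseteq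 t(\mathcal{L})$. It represents $\succcurlyeq$ if for all $b,b'\in\mathcal{B}$: $b\succcurlyeq b'$ iff $\sum_{\phi\in\mathrm{supp}(b)} b(\phi)\lambda(t(\phi))\ge \sum_{\phi\in\mathrm{supp}(b')} b'(\phi)\lambda(t(\phi))$. Non-Triviality: $b_{\mathbf{T}}\succcurlyeq b_\phi\succcurlyeq b_{\mathbf{F}}$ for all $\phi\in\mathcal{L}$, and $b_{\mathbf{T}}\succ b_{\mathbf{F}}$. Objective Expected Utility: $\succcurlyeq$ is complete and transitive and satisfies the Archimedean (continuity) axiom and the Independence axiom with respect to mixtures in $\mathcal{B}$. *)

From Stdlib Require Import Reals Lra List ClassicalEpsilon.
Import ListNotations.
Open Scope R_scope.
Set Implicit Arguments.

Inductive form (P : Type) : Type :=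
  | Var : P -> form P
  | Neg : form P -> form P
  | Conj : form P -> form P -> form P
  | Disj : form P -> form P -> form P.
Arguments Var {P} _.
Arguments Neg {P} _.
Arguments Conj {P} _ _.
Arguments Disj {P} _ _.

Fixpoint lsum {A : Type} (f : A -> R) (s : list A) : R :=
  match s with [] => 0 | x :: s' => f x + lsum f s' end.

Definition covers {P : Type} (b : form P -> R) (s : list (form P)) : Prop :=
  NoDup s /\ (forall phi, b phi > 0 -> In phi s).

(** A bet: b : L -> [0,1] with finite support and total mass 1
    (the sum over a duplicate-free list covering the support equals the sum
    over the support, since the other terms vanish). *)
Definition is_bet {P : Type} (b : form P -> R) : Prop :=
  (forall phi, 0 <= b phi <= 1) /\
  exists s, covers b s /\ lsum b s = 1.

Definition prim_bet {P : Type} (phi : form P) : form P -> R :=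
  fun psi => if excluded_middle_informative (psi = phi) then 1 else 0.

Definition mix {P : Type} (a : R) (b b' : form P -> R) : form P -> R :=
  fun phi => a * b phi + (1 - a) * b' phi.

Definition strict {X : Type} (pref : X -> X -> Prop) (x y : X) : Prop :=
  pref x y /\ ~ pref y x.

Definition NonTriviality {P : Type} (pT pF : P) (pref : (form P -> R) -> (form P -> R) -> Prop) : Prop :=
  (forall phi, pref (prim_bet (Var pT)) (prim_bet phi) /\
               pref (prim_bet phi) (prim_bet (Var pF))) /\
  strict pref (prim_bet (Var pT)) (prim_bet (Var pF)).

Definition ObjectiveEU {P : Type} (pref : (form P -> R) -> (form P -> R) -> Prop) : Prop :=
  (forall b b', is_bet b -> is_bet b' -> pref b b' \/ pref b' b) /\
  (forall b b' b'', is_bet b -> is_bet b' -> is_bet b'' ->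
     pref b b' -> pref b' b'' -> pref b b'') /\
  (forall b b' b'', is_bet b -> is_bet b' -> is_bet b'' ->
     strict pref b b' -> strict pref b' b'' ->
     exists a c, 0 < a < 1 /\ 0 < c < 1 /\
       strict pref (mix a b b'') b' /\ strict pref b' (mix c b b'')) /\
  (forall b b' b'' a, is_bet b -> is_bet b' -> is_bet b'' -> 0 < a < 1 ->
     (pref b b' <-> pref (mix a b b'') (mix a b' b''))).

Definition is_field {Omega : Type} (Sigma : (Omega -> Prop) -> Prop) : Prop :=
  Sigma (fun _ => True) /\
  (forall A, Sigma A -> Sigma (fun w => ~ A w)) /\
  (forall A B, Sigma A -> Sigma B -> Sigma (fun w => A w \/ B w)).

Definition truth_valuation {P Omega : Type} (pT pF : P)
  (t : form P -> (Omega -> Prop)) : Prop :=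
  t (Var pT) = (fun _ => True) /\ t (Var pF) = (fun _ => False).

Definition likelihood_appraisal {Omega : Type} (Sigma : (Omega -> Prop) -> Prop)
  (lam : (Omega -> Prop) -> R) : Prop :=
  (forall A, Sigma A -> 0 <= lam A <= 1) /\
  lam (fun _ => False) = 0 /\ lam (fun _ => True) = 1.

Definition additive {Omega : Type} (Sigma : (Omega -> Prop) -> Prop)
  (lam : (Omega -> Prop) -> R) : Prop :=
  forall A B, Sigma A -> Sigma B -> (forall w, ~ (A w /\ B w)) ->
    lam (fun w => A w \/ B w) = lam A + lam B.

(** Expected value: sum over supp(b) of b(phi) * u(phi), computed over any
    duplicate-free list covering the support (independent of the list). *)
Definition exp_value {P : Type} (b : form P -> R) (u : form P -> R) (s : list (form P)) : R :=
  lsum (fun phi => b phi * u phi) s.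

Definition represents {P Omega : Type} (t : form P -> (Omega -> Prop))
  (lam : (Omega -> Prop) -> R) (pref : (form P -> R) -> (form P -> R) -> Prop) : Prop :=
  forall b b', is_bet b -> is_bet b' ->
    forall s s', covers b s -> covers b' s' ->
      (pref b b' <-> exp_value b (fun phi => lam (t phi)) s >=
                     exp_value b' (fun phi => lam (t phi)) s').

Definition additive_subjective_representation {P : Type} (pT pF : P)
  (pref : (form P -> R) -> (form P -> R) -> Prop) : Prop :=
  exists (Omega : Type) (t : form P -> (Omega -> Prop))
         (Sigma : (Omega -> Prop) -> Prop) (lam : (Omega -> Prop) -> R),
    truth_valuation pT pF t /\ is_field Sigma /\ (forall phi, Sigma (t phi)) /\
    likelihood_appraisal Sigma lam /\ additive Sigma lam /\
    represents t lam pref.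

(* (2) => (1): the expected value of a bet under an additive appraisal is affine
   in the bet, so the preference it induces is complete, transitive, Archimedean
   and independent, and ranks b_T above b_F.
   (1) => (2): the von Neumann-Morgenstern argument. By monotonicity of the
   mixtures a b_T + (1 - a) b_F in a, completeness of R and the Archimedean
   axiom, every bet is indifferent to one of them; let u phi be the weight
   calibrating b_phi. Writing a bet as a mixture of a primitive bet and a bet
   of smaller support, independence shows that every bet b is calibrated by the
   expected value of u under b, which therefore represents the preference.
   Finally any u : L -> [0,1] with u T = 1 and u F = 0 is lambda o t for
   Lebesgue measure on [0,1) and the half-lines t phi = (-oo, u phi). *)

From Pilot Require Import Defs.
From Stdlib Require Import Reals Lra List Permutation ClassicalEpsilon FunctionalExtensionality.
Open Scope R_scope.

Section ListSum.
Context {A : Type}.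
Implicit Types (f g : A -> R) (s : list A).

Lemma lsum_ext_in f g s : (forall x, In x s -> f x = g x) -> lsum f s = lsum g s.
Proof.
  induction s as [|x s IH]; intros H; cbn [lsum]; [reflexivity|].
  rewrite (H x (or_introl eq_refl)), IH; [reflexivity|].
  intros y Hy; apply H; right; exact Hy.
Qed.

Lemma lsum_lin f g a c s :
  lsum (fun x => a * f x + c * g x) s = a * lsum f s + c * lsum g s.
Proof. induction s as [|x s IH]; cbn [lsum]; [|rewrite IH]; ring. Qed.

Lemma lsum_mult_r f c s : lsum (fun x => f x * c) s = lsum f s * c.
Proof. induction s as [|x s IH]; cbn [lsum]; [|rewrite IH]; ring. Qed.

Lemma lsum_le f g s : (forall x, In x s -> f x <= g x) -> lsum f s <= lsum g s.
Proof.
  induction s as [|x s IH]; intros H; cbn [lsum]; [lra|].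
  pose proof (H x (or_introl eq_refl)).
  assert (lsum f s <= lsum g s) by (apply IH; intros y Hy; apply H; right; exact Hy).
  lra.
Qed.

Lemma lsum_nonneg f s : (forall x, In x s -> 0 <= f x) -> 0 <= lsum f s.
Proof.
  induction s as [|x s IH]; intros H; cbn [lsum]; [lra|].
  pose proof (H x (or_introl eq_refl)).
  assert (0 <= lsum f s) by (apply IH; intros y Hy; apply H; right; exact Hy).
  lra.
Qed.

Lemma lsum_ge_elem f s x :
  (forall y, In y s -> 0 <= f y) -> In x s -> f x <= lsum f s.
Proof.
  induction s as [|y s IH]; intros H Hx; cbn [lsum]; [contradiction|].
  assert (Hs : forall z, In z s -> 0 <= f z) by (intros z Hz; apply H; right; exact Hz).
  destruct Hx as [<-|Hx].
  - pose proof (lsum_nonneg f s Hs). lra.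
  - pose proof (IH Hs Hx). pose proof (H y (or_introl eq_refl)). lra.
Qed.

Lemma lsum_perm f s1 s2 : Permutation s1 s2 -> lsum f s1 = lsum f s2.
Proof. induction 1; cbn [lsum]; lra. Qed.

Definition support_of f s : list A :=
  filter (fun x => if Req_dec_T (f x) 0 then false else true) s.

Lemma lsum_support_of f s : lsum f (support_of f s) = lsum f s.
Proof.
  induction s as [|x s IH]; cbn [lsum support_of filter]; [reflexivity|].
  fold (support_of f s).
  destruct (Req_dec_T (f x) 0) as [Hx|Hx]; cbn [lsum]; rewrite IH; lra.
Qed.

(* The nonzero parts of [s1] and [s2] are permutations of each other. *)
Lemma lsum_support_indep f s1 s2 :
  NoDup s1 -> NoDup s2 ->
  (forall x, f x <> 0 -> In x s1) -> (forall x, f x <> 0 -> In x s2) ->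
  lsum f s1 = lsum f s2.
Proof.
  intros N1 N2 C1 C2.
  rewrite <- (lsum_support_of f s1), <- (lsum_support_of f s2).
  apply lsum_perm, NoDup_Permutation; try (apply NoDup_filter; assumption).
  intros x. unfold support_of. rewrite !filter_In.
  destruct (Req_dec_T (f x) 0) as [Hx|Hx]; [split; intros [_ Hf]; discriminate|].
  split; intros _; split; auto.
Qed.

End ListSum.

Section Bets.
Context {P : Type}.
Implicit Types (b u : form P -> R) (phi psi : form P) (s : list (form P)).

Definition form_eq_dec phi psi : {phi = psi} + {phi <> psi} :=
  excluded_middle_informative (phi = psi).

Lemma bet_pos b phi : is_bet b -> b phi <> 0 -> b phi > 0.
Proof. intros [Hb _] Hnz. destruct (Hb phi). lra. Qed.

Lemma covers_nodup b s : (forall phi, b phi > 0 -> In phi s) -> covers b (nodup form_eq_dec s).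
Proof. intros H. split; [apply NoDup_nodup|]. intros phi Hphi. apply nodup_In, H, Hphi. Qed.

Lemma lsum_cover_indep b g s s' :
  is_bet b -> covers b s -> covers b s' -> (forall phi, b phi = 0 -> g phi = 0) ->
  lsum g s = lsum g s'.
Proof.
  intros Hb [Ns Cs] [Ns' Cs'] Hg.
  assert (Hsupp : forall phi, g phi <> 0 -> b phi > 0).
  { intros phi Hphi. apply (bet_pos b phi Hb). intros E. exact (Hphi (Hg phi E)). }
  apply lsum_support_indep; auto.
Qed.

Lemma bet_mass b s : is_bet b -> covers b s -> lsum b s = 1.
Proof.
  intros Hb Cs. pose proof Hb as [_ [s0 [C0 S0]]].
  rewrite <- S0. apply (lsum_cover_indep b); auto.
Qed.

(* Some cover of the support of [b]; arbitrary when [b] has none. *)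
Definition cover b : list (form P) := epsilon (inhabits nil) (covers b).

Lemma cover_covers b : is_bet b -> covers b (cover b).
Proof.
  intros [_ [s [Cs _]]]. exact (epsilon_spec (inhabits nil) (covers b) (ex_intro _ s Cs)).
Qed.

Definition expectation u b : R := exp_value b u (cover b).

Lemma exp_value_expectation u b s : is_bet b -> covers b s -> exp_value b u s = expectation u b.
Proof.
  intros Hb Cs. unfold expectation, exp_value.
  apply (lsum_cover_indep b); auto using cover_covers.
  intros phi ->. ring.
Qed.

Lemma expectation_bounds u b :
  (forall phi, 0 <= u phi <= 1) -> is_bet b -> 0 <= expectation u b <= 1.
Proof.
  intros Hu Hb. pose proof Hb as [Hb01 _].
  rewrite <- (bet_mass b (cover b)); auto using cover_covers.
  unfold expectation, exp_value. split.
  - apply lsum_nonneg. intros phi _. destruct (Hb01 phi), (Hu phi). nra.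
  - apply lsum_le. intros phi _. destruct (Hb01 phi), (Hu phi). nra.
Qed.

Lemma mix_pos a b b' phi :
  0 <= a <= 1 -> 0 <= b phi -> 0 <= b' phi -> mix a b b' phi > 0 -> b phi > 0 \/ b' phi > 0.
Proof.
  unfold mix. intros Ha H H' Hm.
  destruct (Rlt_le_dec 0 (b phi)); [left; lra|].
  destruct (Rlt_le_dec 0 (b' phi)); [right; lra|].
  nra.
Qed.

Lemma mix_1 b b' : mix 1 b b' = b.
Proof. apply functional_extensionality; intro; unfold mix; ring. Qed.

Lemma mix_0 b b' : mix 0 b b' = b'.
Proof. apply functional_extensionality; intro; unfold mix; ring. Qed.

Lemma mix_idem a b : mix a b b = b.
Proof. apply functional_extensionality; intro; unfold mix; ring. Qed.

Lemma mixC a b b' : mix a b b' = mix (1 - a) b' b.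
Proof. apply functional_extensionality; intro; unfold mix; ring. Qed.

Definition joint_cover b b' := nodup form_eq_dec (cover b ++ cover b').

Lemma joint_cover_covers a b b' :
  is_bet b -> is_bet b' -> 0 <= a <= 1 ->
  covers b (joint_cover b b') /\ covers b' (joint_cover b b') /\
  covers (mix a b b') (joint_cover b b').
Proof.
  intros Hb Hb' Ha.
  pose proof (cover_covers b Hb) as [_ C]. pose proof (cover_covers b' Hb') as [_ C'].
  pose proof Hb as [Hb01 _]. pose proof Hb' as [Hb01' _].
  split; [|split]; apply covers_nodup; intros phi Hphi; apply in_or_app.
  - left; auto.
  - right; auto.
  - destruct (mix_pos a b b' phi Ha (proj1 (Hb01 phi)) (proj1 (Hb01' phi)) Hphi); auto.
Qed.

Lemma mix_is_bet a b b' : is_bet b -> is_bet b' -> 0 <= a <= 1 -> is_bet (mix a b b').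
Proof.
  intros Hb Hb' Ha.
  destruct (joint_cover_covers a b b' Hb Hb' Ha) as [C [C' Cm]].
  pose proof Hb as [Hb01 _]. pose proof Hb' as [Hb01' _].
  split.
  - intros phi. unfold mix. destruct (Hb01 phi), (Hb01' phi). split; nra.
  - exists (joint_cover b b'). split; [exact Cm|].
    unfold mix. rewrite lsum_lin, (bet_mass b), (bet_mass b'); auto. ring.
Qed.

Lemma expectation_mix u a b b' :
  is_bet b -> is_bet b' -> 0 <= a <= 1 ->
  expectation u (mix a b b') = a * expectation u b + (1 - a) * expectation u b'.
Proof.
  intros Hb Hb' Ha.
  destruct (joint_cover_covers a b b' Hb Hb' Ha) as [C [C' Cm]].
  rewrite <- !(exp_value_expectation u _ (joint_cover b b')); auto using mix_is_bet.
  unfold exp_value, mix. rewrite <- lsum_lin. apply lsum_ext_in. intros; ring.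
Qed.

Lemma prim_bet_same phi : prim_bet phi phi = 1.
Proof. unfold prim_bet. destruct (excluded_middle_informative (phi = phi)); congruence. Qed.

Lemma prim_bet_other phi psi : psi <> phi -> prim_bet phi psi = 0.
Proof. unfold prim_bet. destruct (excluded_middle_informative (psi = phi)); congruence. Qed.

Lemma prim_bet_covers phi : covers (prim_bet phi) (phi :: nil).
Proof.
  split; [repeat constructor; auto|].
  intros psi H. destruct (form_eq_dec psi phi) as [->|Hne]; [left; reflexivity|].
  rewrite prim_bet_other in H; auto. lra.
Qed.

Lemma prim_is_bet phi : is_bet (prim_bet phi).
Proof.
  split.
  - intros psi. destruct (form_eq_dec psi phi) as [->|Hne].
    + rewrite prim_bet_same; lra.
    + rewrite prim_bet_other; auto; lra.
  - exists (phi :: nil). split; [apply prim_bet_covers|]. cbn [lsum]. rewrite prim_bet_same. ring.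
Qed.

Lemma expectation_prim u phi : expectation u (prim_bet phi) = u phi.
Proof.
  rewrite <- (exp_value_expectation u _ (phi :: nil)); auto using prim_is_bet, prim_bet_covers.
  unfold exp_value. cbn [lsum]. rewrite prim_bet_same. ring.
Qed.

Lemma bet_rest_mass b phi r :
  is_bet b -> covers b (phi :: r) -> lsum b r = 1 - b phi.
Proof. intros Hb Cs. pose proof (bet_mass b _ Hb Cs) as M. cbn [lsum] in M. lra. Qed.

Lemma bet_other_le b phi r psi :
  is_bet b -> covers b (phi :: r) -> psi <> phi -> b psi <= 1 - b phi.
Proof.
  intros Hb Cs Hne. pose proof Hb as [Hb01 _].
  rewrite <- (bet_rest_mass b phi r Hb Cs).
  destruct (Rlt_le_dec 0 (b psi)) as [Hpos|Hle].
  - destruct Cs as [_ C]. destruct (C psi Hpos) as [E|Hin]; [congruence|].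
    apply lsum_ge_elem; auto. intros y _; apply Hb01.
  - pose proof (lsum_nonneg b r (fun y _ => proj1 (Hb01 y))). lra.
Qed.

Lemma bet_concentrated b phi r :
  is_bet b -> covers b (phi :: r) -> b phi = 1 -> b = prim_bet phi.
Proof.
  intros Hb Cs E. pose proof Hb as [Hb01 _].
  apply functional_extensionality. intros psi.
  destruct (form_eq_dec psi phi) as [->|Hne].
  - rewrite prim_bet_same. exact E.
  - rewrite prim_bet_other by exact Hne.
    pose proof (bet_other_le b phi r psi Hb Cs Hne). destruct (Hb01 psi). lra.
Qed.

(* [b'] is the rest of [b] renormalised by [1 - b phi]. *)
Lemma bet_decompose b phi r :
  is_bet b -> covers b (phi :: r) -> b phi < 1 ->
  exists b', is_bet b' /\ covers b' r /\ b = mix (b phi) (prim_bet phi) b'.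
Proof.
  intros Hb Cs Hlt. pose proof Hb as [Hb01 _]. pose proof Cs as [N C].
  apply NoDup_cons_iff in N as [Hphi Nr].
  assert (Hq : 0 < / (1 - b phi)) by (apply Rinv_0_lt_compat; lra).
  assert (Hq1 : (1 - b phi) * / (1 - b phi) = 1) by (apply Rinv_r; lra).
  set (b' := fun psi => if form_eq_dec psi phi then 0 else b psi * / (1 - b phi)).
  assert (Cb' : covers b' r).
  { split; [exact Nr|]. intros psi Hpos. unfold b' in Hpos; cbv beta in Hpos.
    destruct (form_eq_dec psi phi) as [E|Hne]; [lra|].
    assert (b psi > 0) by (apply (bet_pos b psi Hb); intros E; rewrite E in Hpos; lra).
    destruct (C psi) as [E|Hin]; auto; congruence. }
  exists b'. split; [split|split].
  - intros psi. unfold b'; cbv beta. destruct (form_eq_dec psi phi) as [E|Hne]; [lra|].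
    pose proof (bet_other_le b phi r psi Hb Cs Hne). destruct (Hb01 psi).
    assert (b psi * / (1 - b phi) <= (1 - b phi) * / (1 - b phi))
      by (apply Rmult_le_compat_r; lra).
    split; [apply Rmult_le_pos|]; lra.
  - exists r. split; [exact Cb'|].
    rewrite (lsum_ext_in b' (fun psi => b psi * / (1 - b phi))).
    + rewrite lsum_mult_r, (bet_rest_mass b phi r Hb Cs). exact Hq1.
    + intros psi Hin. unfold b'; cbv beta.
      destruct (form_eq_dec psi phi) as [->|_]; [contradiction|reflexivity].
  - exact Cb'.
  - apply functional_extensionality. intros psi. unfold mix, b'; cbv beta.
    destruct (form_eq_dec psi phi) as [->|Hne].
    + rewrite prim_bet_same. ring.
    + rewrite prim_bet_other by exact Hne. field. lra.
Qed.

End Bets.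

Definition expected_utility_represents {P : Type} (u : form P -> R)
  (pref : (form P -> R) -> (form P -> R) -> Prop) : Prop :=
  forall b b', is_bet b -> is_bet b' -> (pref b b' <-> expectation u b >= expectation u b').

Lemma represents_expected_utility {P Omega : Type} (t : form P -> Omega -> Prop)
  (lam : (Omega -> Prop) -> R) pref :
  represents t lam pref <-> expected_utility_represents (fun phi => lam (t phi)) pref.
Proof.
  split.
  - intros H b b' Hb Hb'. exact (H b b' Hb Hb' _ _ (cover_covers b Hb) (cover_covers b' Hb')).
  - intros H b b' Hb Hb' s s' Cs Cs'. rewrite !exp_value_expectation; auto.
Qed.

(* [d] is the position of [y] on the segment from [z] to [x]; mixing [x] and
   [z] with weights just above or below [d] lands on either side of [y]. *)
Lemma mixture_between x y z :
  z < y < x ->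
  exists a c, 0 < a < 1 /\ 0 < c < 1 /\
    a * x + (1 - a) * z > y /\ c * x + (1 - c) * z < y.
Proof.
  intros H. set (d := (y - z) / (x - z)).
  assert (Hd : d * (x - z) = y - z) by (unfold d; field; lra).
  assert (Hd01 : 0 < d < 1) by (split; nra).
  exists ((1 + d) / 2), (d / 2). repeat split; nra.
Qed.

Section ExpectedUtility.
Context {P : Type} (u : form P -> R) (pref : (form P -> R) -> (form P -> R) -> Prop).
Hypothesis Hrep : expected_utility_represents u pref.

Lemma strict_expected_utility b b' :
  is_bet b -> is_bet b' -> (strict pref b b' <-> expectation u b > expectation u b').
Proof. intros Hb Hb'. unfold strict. rewrite (Hrep b b'), (Hrep b' b); auto. lra. Qed.

Lemma expected_utility_ObjectiveEU : ObjectiveEU pref.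
Proof.
  split; [|split; [|split]].
  - intros b b' Hb Hb'. rewrite (Hrep b b'), (Hrep b' b); auto. lra.
  - intros b b' b'' Hb Hb' Hb''. rewrite (Hrep b b'), (Hrep b' b''), (Hrep b b''); auto. lra.
  - intros b b' b'' Hb Hb' Hb''.
    rewrite (strict_expected_utility b b'), (strict_expected_utility b' b''); auto.
    intros H1 H2.
    destruct (mixture_between (expectation u b) (expectation u b') (expectation u b''))
      as [a [c [Ha [Hc [Ea Ec]]]]]; [lra|].
    exists a, c. split; [exact Ha|]. split; [exact Hc|].
    assert (Ha' : 0 <= a <= 1) by lra. assert (Hc' : 0 <= c <= 1) by lra.
    rewrite !strict_expected_utility, !expectation_mix by auto using mix_is_bet. lra.
  - intros b b' b'' a Hb Hb' Hb'' Ha.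
    assert (Ha' : 0 <= a <= 1) by lra.
    rewrite (Hrep b b'), (Hrep (mix a b b'') (mix a b' b'')), !expectation_mix
      by auto using mix_is_bet.
    split; intros; nra.
Qed.

Lemma expected_utility_NonTriviality (pT pF : P) :
  (forall phi, 0 <= u phi <= 1) -> u (Var pT) = 1 -> u (Var pF) = 0 ->
  NonTriviality pT pF pref.
Proof.
  intros Hu HT HF. split.
  - intros phi.
    rewrite !(Hrep (prim_bet _) (prim_bet _)), !expectation_prim by apply prim_is_bet.
    pose proof (Hu phi). lra.
  - rewrite strict_expected_utility, !expectation_prim by apply prim_is_bet. lra.
Qed.

End ExpectedUtility.

Lemma additive_representation_expected_utility {P : Type} (pT pF : P) pref :
  additive_subjective_representation pT pF pref ->
  exists u : form P -> R,
    (forall phi, 0 <= u phi <= 1) /\ u (Var pT) = 1 /\ u (Var pF) = 0 /\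
    expected_utility_represents u pref.
Proof.
  intros [Omega [t [Sigma [lam [[HtT HtF] [_ [Ht [[Hlam [Hlam0 Hlam1]] [_ Hrep]]]]]]]]].
  exists (fun phi => lam (t phi)). split; [|split; [|split]].
  - intros phi. apply Hlam, Ht.
  - cbv beta. rewrite HtT. exact Hlam1.
  - cbv beta. rewrite HtF. exact Hlam0.
  - apply represents_expected_utility, Hrep.
Qed.

Section MixtureSpace.
Variables (P : Type) (pT pF : P) (pref : (form P -> R) -> (form P -> R) -> Prop).
Hypotheses (NT : NonTriviality pT pF pref) (OEU : ObjectiveEU pref).

Definition indiff (b b' : form P -> R) : Prop := pref b b' /\ pref b' b.

(* Every bet turns out indifferent to the reference bet at its expected utility. *)
Definition reference_bet (a : R) : form P -> R :=
  mix a (prim_bet (Var pT)) (prim_bet (Var pF)).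

Lemma pref_refl b : is_bet b -> pref b b.
Proof. intros Hb. destruct OEU as [Hc _]. destruct (Hc b b Hb Hb); assumption. Qed.

Lemma pref_trans b b' b'' :
  is_bet b -> is_bet b' -> is_bet b'' -> pref b b' -> pref b' b'' -> pref b b''.
Proof. destruct OEU as [_ [Ht _]]. exact (Ht b b' b''). Qed.

Lemma not_pref_strict b b' : is_bet b -> is_bet b' -> ~ pref b b' -> strict pref b' b.
Proof.
  intros Hb Hb' H. destruct OEU as [Hc _].
  split; [destruct (Hc b b' Hb Hb'); tauto | exact H].
Qed.

Lemma strict_mix a b b' b'' :
  0 < a <= 1 -> is_bet b -> is_bet b' -> is_bet b'' ->
  strict pref b b' -> strict pref (mix a b b'') (mix a b' b'').
Proof.
  intros Ha Hb Hb' Hb'' [H1 H2].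
  destruct (Req_dec a 1) as [->|Ha1]; [rewrite !mix_1; split; assumption|].
  destruct OEU as [_ [_ [_ Hi]]].
  split; [apply Hi; auto; lra|].
  intros H. apply H2. apply (Hi b' b b'' a); auto. lra.
Qed.

Lemma indiff_trans b b' b'' :
  is_bet b -> is_bet b' -> is_bet b'' -> indiff b b' -> indiff b' b'' -> indiff b b''.
Proof.
  intros Hb Hb' Hb'' [H1 H2] [H3 H4].
  split; [apply (pref_trans b b' b'') | apply (pref_trans b'' b' b)]; assumption.
Qed.

Lemma indiff_mix_l a b b' b'' :
  0 <= a <= 1 -> is_bet b -> is_bet b' -> is_bet b'' ->
  indiff b b' -> indiff (mix a b b'') (mix a b' b'').
Proof.
  intros Ha Hb Hb' Hb'' [H1 H2].
  destruct (Req_dec a 0) as [->|Ha0]; [rewrite !mix_0; split; apply pref_refl; exact Hb''|].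
  destruct (Req_dec a 1) as [->|Ha1]; [rewrite !mix_1; split; assumption|].
  destruct OEU as [_ [_ [_ Hi]]].
  split; apply Hi; auto; lra.
Qed.

Lemma indiff_mix a b b' c c' :
  0 <= a <= 1 -> is_bet b -> is_bet b' -> is_bet c -> is_bet c' ->
  indiff b b' -> indiff c c' -> indiff (mix a b c) (mix a b' c').
Proof.
  intros Ha Hb Hb' Hc Hc' Eb Ec.
  apply (indiff_trans _ (mix a b' c)); auto using mix_is_bet.
  - apply indiff_mix_l; assumption.
  - rewrite (mixC a b' c), (mixC a b' c').
    apply indiff_mix_l; auto. lra.
Qed.

Lemma reference_bet_is_bet a : 0 <= a <= 1 -> is_bet (reference_bet a).
Proof. intros Ha. apply mix_is_bet; auto using prim_is_bet. Qed.

Lemma reference_bet_1 : reference_bet 1 = prim_bet (Var pT).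
Proof. apply mix_1. Qed.

Lemma reference_bet_0 : reference_bet 0 = prim_bet (Var pF).
Proof. apply mix_0. Qed.

Lemma mix_reference_bet a x y :
  mix a (reference_bet x) (reference_bet y) = reference_bet (a * x + (1 - a) * y).
Proof. apply functional_extensionality; intro; unfold reference_bet, mix; ring. Qed.

Lemma reference_bet_strict x y :
  0 <= y -> y < x -> x <= 1 -> strict pref (reference_bet x) (reference_bet y).
Proof.
  intros Hy Hxy Hx.
  assert (B : forall z, 0 <= z <= 1 -> is_bet (reference_bet z)) by exact reference_bet_is_bet.
  assert (S10 : strict pref (reference_bet 1) (reference_bet 0)).
  { rewrite reference_bet_1, reference_bet_0. apply NT. }
  assert (Sx0 : strict pref (reference_bet x) (reference_bet 0)).
  { pose proof (strict_mix x _ _ (reference_bet 0) ltac:(lra) (B 1 ltac:(lra))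
      (B 0 ltac:(lra)) (B 0 ltac:(lra)) S10) as S.
    rewrite mix_idem, mix_reference_bet in S.
    replace (x * 1 + (1 - x) * 0) with x in S by ring. exact S. }
  set (c := 1 - y / x).
  assert (Hc : 0 < c <= 1).
  { unfold c. assert (0 <= y / x < 1); [|lra].
    split; [apply Rmult_le_pos; [lra|left; apply Rinv_0_lt_compat; lra]|].
    apply (Rmult_lt_reg_r x); [lra|]. unfold Rdiv. rewrite Rmult_assoc, Rinv_l; lra. }
  pose proof (strict_mix c _ _ (reference_bet x) Hc (B x ltac:(lra)) (B 0 ltac:(lra))
    (B x ltac:(lra)) Sx0) as S.
  rewrite mix_idem, mix_reference_bet in S.
  replace (c * 0 + (1 - c) * x) with y in S by (unfold c; field; lra). exact S.
Qed.

Lemma reference_bet_pref x y :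
  0 <= x <= 1 -> 0 <= y <= 1 -> (pref (reference_bet x) (reference_bet y) <-> y <= x).
Proof.
  intros Hx Hy. split; intros H.
  - destruct (Rle_lt_dec y x) as [Hle|Hlt]; [exact Hle|].
    exfalso. exact (proj2 (reference_bet_strict y x ltac:(lra) Hlt ltac:(lra)) H).
  - destruct (Req_dec y x) as [->|Hne].
    + apply pref_refl, reference_bet_is_bet, Hx.
    + apply reference_bet_strict; lra.
Qed.

Section Calibration.
Variable b : form P -> R.
Hypotheses (Hb : is_bet b) (HbT : pref (prim_bet (Var pT)) b) (HbF : pref b (prim_bet (Var pF))).

Definition calibration_levels (a : R) : Prop := 0 <= a <= 1 /\ pref b (reference_bet a).

Lemma calibration_levels_lub :
  exists m, is_lub calibration_levels m /\ 0 <= m <= 1.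
Proof.
  assert (L0 : calibration_levels 0) by (split; [lra|rewrite reference_bet_0; exact HbF]).
  assert (Bd : bound calibration_levels) by (exists 1; intros a [Ha _]; lra).
  destruct (completeness calibration_levels Bd (ex_intro _ 0 L0)) as [m [Hub Hlub]].
  exists m. split; [split; assumption|]. split.
  - apply Hub, L0.
  - apply Hlub. intros a [Ha _]; lra.
Qed.

(* Were [reference_bet m] strictly better than [b], so would be an Archimedean
   mixture of it with [b_F], whose level [a * m] would bound the levels. *)
Lemma pref_calibration_lub m :
  is_lub calibration_levels m -> 0 <= m <= 1 -> pref b (reference_bet m).
Proof.
  intros [Hub Hlub] Hm.
  destruct (classic (pref b (reference_bet m))) as [H|H]; [exact H|exfalso].
  assert (Bm := reference_bet_is_bet m Hm).
  assert (Sm : strict pref (reference_bet m) b) by (apply not_pref_strict; assumption).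
  assert (Hm0 : m <= 0).
  { destruct (classic (pref (prim_bet (Var pF)) b)) as [HFb|HFb].
    - apply Hlub. intros a [Ha Hba].
      apply (reference_bet_pref 0 a); try lra. rewrite reference_bet_0.
      apply (pref_trans _ b); auto using prim_is_bet, reference_bet_is_bet.
    - destruct OEU as [_ [_ [Har _]]].
      destruct (Har _ _ _ Bm Hb (prim_is_bet _) Sm (not_pref_strict _ _ (prim_is_bet _) Hb HFb))
        as [a [_ [Ha [_ [[S _] _]]]]].
      rewrite <- reference_bet_0, mix_reference_bet in S.
      replace (a * m + (1 - a) * 0) with (a * m) in S by ring.
      assert (m <= a * m); [|nra].
      apply Hlub. intros a' [Ha' Hba'].
      apply (reference_bet_pref (a * m) a'); try nra.
      apply (pref_trans _ b); auto using reference_bet_is_bet.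
      apply reference_bet_is_bet; nra. }
  apply H. replace m with 0 by lra. rewrite reference_bet_0. exact HbF.
Qed.

Lemma calibration_lub_pref m :
  is_lub calibration_levels m -> 0 <= m <= 1 -> pref (reference_bet m) b.
Proof.
  intros [Hub Hlub] Hm.
  destruct (classic (pref (reference_bet m) b)) as [H|H]; [exact H|exfalso].
  assert (Bm := reference_bet_is_bet m Hm).
  assert (Sm : strict pref b (reference_bet m)) by (apply not_pref_strict; assumption).
  assert (Hm1 : 1 <= m).
  { destruct (classic (pref b (prim_bet (Var pT)))) as [HbT'|HbT'].
    - apply Hub. split; [lra|]. rewrite reference_bet_1. exact HbT'.
    - destruct OEU as [_ [_ [Har _]]].
      destruct (Har _ _ _ (prim_is_bet _) Hb Bm (not_pref_strict _ _ Hb (prim_is_bet _) HbT') Sm)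
        as [_ [c [_ [Hc [_ [S _]]]]]].
      rewrite <- reference_bet_1, mix_reference_bet in S.
      assert (c * 1 + (1 - c) * m <= m); [|nra].
      apply Hub. split; [nra|exact S]. }
  apply H. replace m with 1 by lra. rewrite reference_bet_1. exact HbT.
Qed.

Lemma calibration_exists : exists a, 0 <= a <= 1 /\ indiff b (reference_bet a).
Proof.
  destruct calibration_levels_lub as [m [Hlub Hm]].
  exists m. split; [exact Hm|].
  split; [apply pref_calibration_lub | apply calibration_lub_pref]; assumption.
Qed.

End Calibration.

Lemma expectation_calibrates (u : form P -> R) :
  (forall phi, 0 <= u phi <= 1 /\ indiff (prim_bet phi) (reference_bet (u phi))) ->
  forall b, is_bet b -> indiff b (reference_bet (expectation u b)).
Proof.
  intros Hu.
  assert (Hu01 : forall phi, 0 <= u phi <= 1) by (intros; apply Hu).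
  assert (Hind : forall s b, is_bet b -> covers b s -> indiff b (reference_bet (expectation u b))).
  { induction s as [|phi r IH]; intros b Hb Cs.
    - pose proof (bet_mass b nil Hb Cs). cbn [lsum] in *. lra.
    - pose proof Hb as [Hb01 _].
      destruct (Req_dec (b phi) 1) as [E|Hne].
      + rewrite (bet_concentrated b phi r Hb Cs E), expectation_prim. apply Hu.
      + destruct (bet_decompose b phi r Hb Cs) as [b' [Hb' [Cb' Eb]]];
          [destruct (Hb01 phi); lra|].
        assert (Hp : 0 <= b phi <= 1) by apply Hb01.
        rewrite Eb, expectation_mix, expectation_prim, <- mix_reference_bet
          by auto using prim_is_bet.
        apply indiff_mix; auto using prim_is_bet, reference_bet_is_bet, expectation_bounds.
        apply Hu. }
  intros b Hb. exact (Hind (cover b) b Hb (cover_covers b Hb)).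
Qed.

Lemma ObjectiveEU_expected_utility :
  exists u : form P -> R,
    (forall phi, 0 <= u phi <= 1) /\ u (Var pT) = 1 /\ u (Var pF) = 0 /\
    expected_utility_represents u pref.
Proof.
  assert (Hex : forall phi, exists a, 0 <= a <= 1 /\ indiff (prim_bet phi) (reference_bet a)).
  { intros phi. destruct NT as [Hphi _].
    apply calibration_exists; [apply prim_is_bet | apply Hphi..]. }
  set (u := fun phi => proj1_sig (constructive_indefinite_description _ (Hex phi))).
  assert (Hu : forall phi, 0 <= u phi <= 1 /\ indiff (prim_bet phi) (reference_bet (u phi)))
    by (intros phi; exact (proj2_sig (constructive_indefinite_description _ (Hex phi)))).
  assert (Hu01 : forall phi, 0 <= u phi <= 1) by (intros; apply Hu).
  exists u. split; [exact Hu01|]. split; [|split].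
  - destruct (Hu (Var pT)) as [H01 [_ H]]. rewrite <- reference_bet_1 in H.
    apply reference_bet_pref in H; lra.
  - destruct (Hu (Var pF)) as [H01 [H _]]. rewrite <- reference_bet_0 in H.
    apply reference_bet_pref in H; lra.
  - intros b b' Hb Hb'.
    destruct (expectation_calibrates u Hu b Hb) as [H1 H2].
    destruct (expectation_calibrates u Hu b' Hb') as [H3 H4].
    assert (Eb := expectation_bounds u b Hu01 Hb).
    assert (Eb' := expectation_bounds u b' Hu01 Hb').
    assert (Bb := reference_bet_is_bet _ Eb). assert (Bb' := reference_bet_is_bet _ Eb').
    split; intros H.
    + apply Rle_ge, (reference_bet_pref _ _ Eb Eb').
      apply (pref_trans _ b); auto. apply (pref_trans _ b'); auto.
    + apply Rge_le, (reference_bet_pref _ _ Eb Eb') in H.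
      apply (pref_trans _ (reference_bet (expectation u b))); auto.
      apply (pref_trans _ (reference_bet (expectation u b'))); auto.
Qed.

End MixtureSpace.

Module LebesgueModel.
From mathcomp Require Import all_boot all_order all_algebra all_classical all_reals.
From mathcomp Require Import ereal measure lebesgue_measure Rstruct.
Import Order.TTheory GRing.Theory Num.Theory.
Local Open Scope classical_set_scope.
Local Open Scope ring_scope.

Definition unit_itv : set (measurableTypeR R) := [set` `[0%R, 1%R[%R ].

Definition unit_length (A : set R) : R := fine (lebesgue_measure (A `&` unit_itv)).

Definition borel (A : set R) : Prop := @measurable _ (measurableTypeR R) A.

Lemma borel_unit_itv : borel unit_itv.
Proof. exact: measurable_itv. Qed.

Lemma borel_halfline (c : R) : borel [set x | x < c]%R.
Proof.
have -> : [set x | x < c]%R = [set` `]-oo, c[%R ] by apply/seteqP; split => x; rewrite /= in_itv.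
exact: measurable_itv.
Qed.

Lemma borel_field : is_field borel.
Proof.
split; first exact: measurableT.
split; first by move=> A mA; exact: measurableC.
by move=> A B mA mB; exact: measurableU.
Qed.

Lemma lebesgue_unit_itv : lebesgue_measure unit_itv = 1%:E.
Proof. by rewrite /unit_itv lebesgue_measure_itv /= lte_fin ltr01 sube0. Qed.

Lemma fine_unit_interval (x : \bar R) :
  (0 <= x)%E -> (x <= 1%:E)%E -> x = (fine x)%:E /\ 0 <= fine x <= 1.
Proof. by case: x => [r| |] //=; rewrite !lee_fin => -> ->. Qed.

Lemma unit_lengthE A : borel A ->
  lebesgue_measure (A `&` unit_itv) = (unit_length A)%:E /\ 0 <= unit_length A <= 1.
Proof.
move=> mA.
have mAI : borel (A `&` unit_itv) by apply: measurableI => //; exact: borel_unit_itv.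
have m0 := measure_ge0 lebesgue_measure (A `&` unit_itv).
have m1 : (lebesgue_measure (A `&` unit_itv) <= 1%:E)%E.
  rewrite -lebesgue_unit_itv; apply: le_measure; rewrite ?inE //; exact: borel_unit_itv.
exact: fine_unit_interval.
Qed.

Lemma unit_length_halfline (c : R) : 0 <= c <= 1 -> unit_length [set x | x < c]%R = c.
Proof.
move=> /andP[c0 c1]; rewrite /unit_length.
have -> : [set x | x < c]%R `&` unit_itv = [set` `[0%R, c[%R].
  apply/seteqP; split => x /=; rewrite /unit_itv /= !in_itv /=.
    by move=> [xc /andP[x0 _]]; rewrite x0 xc.
  by move=> /andP[x0 xc]; rewrite xc x0 (lt_le_trans xc c1).
rewrite lebesgue_measure_itv /= lte_fin.
case: ltP => h; first by rewrite sube0.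
by apply/le_anti; rewrite c0 h.
Qed.

Lemma unit_length_appraisal : likelihood_appraisal borel unit_length.
Proof.
split.
  move=> A mA; have [_ /andP[h1 h2]] := unit_lengthE _ mA; split; exact/RleP.
split; first by rewrite /unit_length set0I measure0.
by rewrite /unit_length setTI lebesgue_unit_itv.
Qed.

Lemma unit_length_additive : Defs.additive borel unit_length.
Proof.
move=> A B mA mB dAB.
have mU : borel (fun w => A w \/ B w) by exact: measurableU.
have [eA _] := unit_lengthE _ mA.
have [eB _] := unit_lengthE _ mB.
have [eU _] := unit_lengthE _ mU.
apply/EFin_inj; rewrite RplusE EFinD -eA -eB -eU.
have -> : (fun w => A w \/ B w) `&` unit_itv = (A `&` unit_itv) `|` (B `&` unit_itv).
  by rewrite -setIUl.
apply: measureU; try by apply: measurableI => //; exact: borel_unit_itv.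
by apply/seteqP; split => x //= [[Ax _] [Bx _]]; exact: (dAB x).
Qed.

Local Close Scope ring_scope.

(* [t phi] is the half-line below [u phi], except that [T] and [F] must be
   sent to the whole space and the empty set on the nose. *)
Lemma additive_model_of_utility (P : Type) (pT pF : P) (u : Defs.form P -> R) :
  Var pT <> Var pF -> (forall phi, 0 <= u phi <= 1) ->
  u (Var pT) = 1 -> u (Var pF) = 0 ->
  exists (t : Defs.form P -> R -> Prop),
    truth_valuation pT pF t /\ (forall phi, borel (t phi)) /\
    forall phi, unit_length (t phi) = u phi.
Proof.
move=> nTF u01 uT uF.
pose t phi : R -> Prop :=
  if excluded_middle_informative (phi = Var pT) then setT
  else if excluded_middle_informative (phi = Var pF) then set0
  else [set x | (x < u phi)%R].
have [_ [l0 l1]] := unit_length_appraisal.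
exists t; split; [|split].
- rewrite /t; split; first by destruct (excluded_middle_informative (Var pT = Var pT)).
  destruct (excluded_middle_informative (Var pF = Var pT)) as [E|NE].
    by case: (nTF (esym E)).
  by destruct (excluded_middle_informative (Var pF = Var pF)).
- move=> phi; rewrite /t.
  destruct (excluded_middle_informative (phi = Var pT)); first exact: measurableT.
  destruct (excluded_middle_informative (phi = Var pF)); first exact: measurable0.
  exact: borel_halfline.
- move=> phi; rewrite /t.
  destruct (excluded_middle_informative (phi = Var pT)) as [->|nT]; first by rewrite l1 uT.
  destruct (excluded_middle_informative (phi = Var pF)) as [->|nF]; first by rewrite l0 uF.
  by have [h0 h1] := u01 phi; apply: unit_length_halfline; apply/andP; split; apply/RleP.
Qed.

End LebesgueModel.

Lemma NonTriviality_Var_neq {P : Type} (pT pF : P) pref :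
  NonTriviality pT pF pref -> Var pT <> Var pF.
Proof. intros [_ [HTF HnFT]] E. rewrite E in HTF, HnFT. contradiction. Qed.

Lemma expected_utility_additive_representation {P : Type} (pT pF : P) pref u :
  Var pT <> Var pF -> (forall phi, 0 <= u phi <= 1) -> u (Var pT) = 1 -> u (Var pF) = 0 ->
  expected_utility_represents u pref -> additive_subjective_representation pT pF pref.
Proof.
  intros HTF Hu HuT HuF Hrep.
  destruct (LebesgueModel.additive_model_of_utility P pT pF u HTF Hu HuT HuF)
    as [t [Ht [Hmeas Hlen]]].
  exists R, t, LebesgueModel.borel, LebesgueModel.unit_length.
  split; [exact Ht|]. split; [exact LebesgueModel.borel_field|].
  split; [exact Hmeas|]. split; [exact LebesgueModel.unit_length_appraisal|].
  split; [exact LebesgueModel.unit_length_additive|].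
  apply represents_expected_utility.
  replace (fun phi => LebesgueModel.unit_length (t phi)) with u
    by (apply functional_extensionality; intros phi; symmetry; apply Hlen).
  exact Hrep.
Qed.

Theorem proposition1 (P : Type)
  (pT pF : P) (pref : (form P -> R) -> (form P -> R) -> Prop) :
  (NonTriviality pT pF pref /\ ObjectiveEU pref) <->
  additive_subjective_representation pT pF pref.
Proof.
  split.
  - intros [NT OEU].
    destruct (ObjectiveEU_expected_utility P pT pF pref NT OEU) as [u [Hu [HuT [HuF Hrep]]]].
    exact (expected_utility_additive_representation pT pF pref u
      (NonTriviality_Var_neq pT pF pref NT) Hu HuT HuF Hrep).
  - intros Hrepr.
    destruct (additive_representation_expected_utility pT pF pref Hrepr)
      as [u [Hu [HuT [HuF Hrep]]]].
    split.
    + exact (expected_utility_NonTriviality u pref Hrep pT pF Hu HuT HuF).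
    + exact (expected_utility_ObjectiveEU u pref Hrep).
Qed.
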